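(* For every Hermitian $S=(s_{jl})\in\mathbb{C}^{4\times4}$ and every $\varepsilon\in\{1,-1\}$, $$\max\{p(\theta_1,\theta_2)^2-q(\theta_1,\theta_2):\theta_1,\theta_2\in(-\pi,\pi]\}\ge0 .$$
   Context: Let $S=(s_{jl})_{j,l=1}^4$ be a Hermitian $4\times4$ complex matrix (so $s_{jj}\in\mathbb{R}$ and $s_{lj}=\overline{s_{jl}}$) and $\varepsilon\in\{1,-1\}$. For $\theta_1,\theta_2\in\mathbb{R}$ define $$p=-\tfrac12\Big[s_{11}+s_{22}+s_{33}+s_{44}+2\varepsilon\operatorname{Re}(s_{12}\mathrm{e}^{i\theta_1})+2\varepsilon\operatorname{Re}(s_{34}\mathrm{e}^{i\theta_2})\Big],$$ $$\begin{aligned}q={}&-\big(|s_{13}|^2-s_{11}s_{33}+|s_{14}|^2-s_{11}s_{44}+|s_{23}|^2-s_{22}s_{33}+|s_{24}|^2-s_{22}s_{44}\big)\\&-2\varepsilon\Big[-(s_{33}+s_{44})\operatorname{Re}(s_{12}\mathrm{e}^{i\theta_1})+\operatorname{Re}\big((s_{13}\overline{s_{23}}+s_{14}\overline{s_{24}})\mathrm{e}^{i\theta_1}\big)\\&\qquad-(s_{11}+s_{22})\operatorname{Re}(s_{34}\mathrm{e}^{i\theta_2})+\operatorname{Re}\big((\overline{s_{13}}s_{14}+\overline{s_{23}}s_{24})\mathrm{e}^{i\theta_2}\big)\Big]\\&-2\operatorname{Re}\big((s_{14}\overline{s_{23}}-s_{12}s_{34})\mathrm{e}^{i(\theta_1+\theta_2)}\big)-2\operatorname{Re}\big((s_{13}\overline{s_{24}}-s_{12}\overline{s_{34}})\mathrm{e}^{i(\theta_1-\theta_2)}\big).\end{aligned}$$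 (These are the coefficients of the asymptotic band equation $d^2+2pd+q=0$ for a lattice with coupling $\Psi'_v=S\Psi_v$ at each vertex, where $\varepsilon=(-1)^n$.) *)

From Stdlib Require Import Reals Lra.
Open Scope R_scope.

Record Cx := mkC { re : R; im : R }.

Definition Cmul (z w : Cx) : Cx :=
  mkC (re z * re w - im z * im w) (re z * im w + im z * re w).
Definition Cadd (z w : Cx) : Cx := mkC (re z + re w) (im z + im w).
Definition Csub (z w : Cx) : Cx := mkC (re z - re w) (im z - im w).
Definition Cconj (z : Cx) : Cx := mkC (re z) (- im z).
Definition Cnorm2 (z : Cx) : R := re z * re z + im z * im z.
Definition expi (t : R) : Cx := mkC (cos t) (sin t).

(* A 4x4 complex matrix, indexed by 1..4 (entries outside are irrelevant). *)
Definition Mat4 := nat -> nat -> Cx.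

Definition in14 (j : nat) : Prop := (1 <= j <= 4)%nat.

Definition Hermitian4 (S : Mat4) : Prop :=
  forall j l, in14 j -> in14 l -> S l j = Cconj (S j l).

Definition pcoef (S : Mat4) (eps t1 t2 : R) : R :=
  - / 2 * ( re (S 1%nat 1%nat) + re (S 2%nat 2%nat) + re (S 3%nat 3%nat) + re (S 4%nat 4%nat)
          + 2 * eps * re (Cmul (S 1%nat 2%nat) (expi t1))
          + 2 * eps * re (Cmul (S 3%nat 4%nat) (expi t2)) ).

Definition qcoef (S : Mat4) (eps t1 t2 : R) : R :=
  let s := fun j l => S j l in
  let d := fun j => re (S j j) in
  - ( Cnorm2 (s 1 3)%nat - d 1%nat * d 3%nat + Cnorm2 (s 1 4)%nat - d 1%nat * d 4%nat
    + Cnorm2 (s 2 3)%nat - d 2%nat * d 3%nat + Cnorm2 (s 2 4)%nat - d 2%nat * d 4%nat )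
  - 2 * eps * ( - (d 3%nat + d 4%nat) * re (Cmul (s 1 2)%nat (expi t1))
      + re (Cmul (Cadd (Cmul (s 1 3)%nat (Cconj (s 2 3)%nat))
                       (Cmul (s 1 4)%nat (Cconj (s 2 4)%nat))) (expi t1))
      - (d 1%nat + d 2%nat) * re (Cmul (s 3 4)%nat (expi t2))
      + re (Cmul (Cadd (Cmul (Cconj (s 1 3)%nat) (s 1 4)%nat)
                       (Cmul (Cconj (s 2 3)%nat) (s 2 4)%nat)) (expi t2)) )
  - 2 * re (Cmul (Csub (Cmul (s 1 4)%nat (Cconj (s 2 3)%nat)) (Cmul (s 1 2)%nat (s 3 4)%nat))
                 (expi (t1 + t2)))
  - 2 * re (Cmul (Csub (Cmul (s 1 3)%nat (Cconj (s 2 4)%nat)) (Cmul (s 1 2)%nat (Cconj (s 3 4)%nat)))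
                 (expi (t1 - t2))).

Definition in_dom (t : R) : Prop := - PI < t <= PI.

Definition Fdisc (S : Mat4) (eps t1 t2 : R) : R :=
  pcoef S eps t1 t2 ^ 2 - qcoef S eps t1 t2.

(* The maximum over the closed square exists because p^2 - q is a trigonometric
   polynomial in (theta1, theta2), hence Lipschitz.  It is nonnegative because it
   dominates the average over the 16 points of the grid of quarter turns, and
   averaging over quarter turns kills every Fourier mode of p^2 - q that occurs
   except the constant one, which is a sum of squares:
     (s11 + s22 - s33 - s44)^2/4 + eps^2 (|s12|^2 + |s34|^2)/2
       + |s13|^2 + |s14|^2 + |s23|^2 + |s24|^2. *)

From Stdlib Require Import Reals Lra List ClassicalEpsilon.
Import ListNotations.
Open Scope R_scope.

Lemma lipschitz_of_derivative_bound (f f' : R -> R) :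
  (forall c, derivable_pt_lim f c (f' c)) -> (forall c, Rabs (f' c) <= 1) ->
  forall a b, Rabs (f a - f b) <= Rabs (a - b).
Proof.
  intros Hd Hb a b.
  destruct (MVT_abs f f' b a (fun c _ => Hd c)) as [c [-> _]].
  pose proof (Hb c); pose proof (Rabs_pos (a - b)); nra.
Qed.

Lemma cos_lipschitz (a b : R) : Rabs (cos a - cos b) <= Rabs (a - b).
Proof.
  apply (lipschitz_of_derivative_bound cos (fun x => - sin x)).
  - exact derivable_pt_lim_cos.
  - intros c; rewrite Rabs_Ropp; apply Rabs_le; apply SIN_bound.
Qed.

Lemma sin_lipschitz (a b : R) : Rabs (sin a - sin b) <= Rabs (a - b).
Proof.
  apply (lipschitz_of_derivative_bound sin cos).
  - exact derivable_pt_lim_sin.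
  - intros c; apply Rabs_le; apply COS_bound.
Qed.

Lemma lipschitz_continuity_pt (g : R -> R) (K : R) :
  (forall x x', Rabs (g x - g x') <= K * Rabs (x - x')) -> forall x, continuity_pt g x.
Proof.
  intros HK x0 e He.
  assert (HK1 : 0 < Rabs K + 1) by (pose proof (Rabs_pos K); lra).
  exists (e / (Rabs K + 1)); split; [apply Rdiv_lt_0_compat; lra |].
  intros x [_ Hx]; simpl in *; unfold R_dist in *.
  apply Rle_lt_trans with ((Rabs K + 1) * Rabs (x - x0)).
  - specialize (HK x x0); pose proof (RRle_abs K); pose proof (Rabs_pos (x - x0)); nra.
  - apply Rmult_lt_reg_r with (/ (Rabs K + 1)); [apply Rinv_0_lt_compat; lra |].
    replace ((Rabs K + 1) * Rabs (x - x0) * / (Rabs K + 1)) with (Rabs (x - x0))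
      by (field; lra).
    exact Hx.
Qed.

Definition lipschitz2 (f : R -> R -> R) : Prop :=
  exists K, forall x y x' y', Rabs (f x y - f x' y') <= K * (Rabs (x - x') + Rabs (y - y')).

Definition bounded_lipschitz2 (f : R -> R -> R) : Prop :=
  (exists M, forall x y, Rabs (f x y) <= M) /\ lipschitz2 f.

Lemma lipschitz2_fst : lipschitz2 (fun x _ => x).
Proof. exists 1; intros; pose proof (Rabs_pos (y - y')); lra. Qed.

Lemma lipschitz2_snd : lipschitz2 (fun _ y => y).
Proof. exists 1; intros; pose proof (Rabs_pos (x - x')); lra. Qed.

Lemma lipschitz2_plus (f g : R -> R -> R) :
  lipschitz2 f -> lipschitz2 g -> lipschitz2 (fun x y => f x y + g x y).
Proof.
  intros [K1 H1] [K2 H2]; exists (K1 + K2); intros x y x' y'.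
  replace (f x y + g x y - (f x' y' + g x' y')) with ((f x y - f x' y') + (g x y - g x' y'))
    by ring.
  eapply Rle_trans; [apply Rabs_triang |].
  specialize (H1 x y x' y'); specialize (H2 x y x' y'); lra.
Qed.

Lemma lipschitz2_opp (f : R -> R -> R) : lipschitz2 f -> lipschitz2 (fun x y => - f x y).
Proof.
  intros [K H]; exists K; intros x y x' y'.
  replace (- f x y - - f x' y') with (- (f x y - f x' y')) by ring.
  rewrite Rabs_Ropp; apply H.
Qed.

Lemma lipschitz2_minus (f g : R -> R -> R) :
  lipschitz2 f -> lipschitz2 g -> lipschitz2 (fun x y => f x y - g x y).
Proof. intros Hf Hg; apply (lipschitz2_plus f (fun x y => - g x y) Hf (lipschitz2_opp g Hg)). Qed.

Lemma bounded_lipschitz2_const (c : R) : bounded_lipschitz2 (fun _ _ => c).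
Proof.
  split; [exists (Rabs c); intros; lra |].
  exists 0; intros; rewrite Rminus_diag, Rabs_R0; lra.
Qed.

Lemma bounded_lipschitz2_comp (g : R -> R) (phi : R -> R -> R) :
  (forall a, Rabs (g a) <= 1) -> (forall a b, Rabs (g a - g b) <= Rabs (a - b)) ->
  lipschitz2 phi -> bounded_lipschitz2 (fun x y => g (phi x y)).
Proof.
  intros Hb Hl [K HK]; split; [exists 1; intros; apply Hb |].
  exists K; intros; eapply Rle_trans; [apply Hl | apply HK].
Qed.

Lemma bounded_lipschitz2_cos (phi : R -> R -> R) :
  lipschitz2 phi -> bounded_lipschitz2 (fun x y => cos (phi x y)).
Proof.
  apply bounded_lipschitz2_comp; [intros; apply Rabs_le, COS_bound | exact cos_lipschitz].
Qed.

Lemma bounded_lipschitz2_sin (phi : R -> R -> R) :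
  lipschitz2 phi -> bounded_lipschitz2 (fun x y => sin (phi x y)).
Proof.
  apply bounded_lipschitz2_comp; [intros; apply Rabs_le, SIN_bound | exact sin_lipschitz].
Qed.

Lemma bounded_lipschitz2_plus (f g : R -> R -> R) :
  bounded_lipschitz2 f -> bounded_lipschitz2 g -> bounded_lipschitz2 (fun x y => f x y + g x y).
Proof.
  intros [[M1 B1] L1] [[M2 B2] L2]; split; [| now apply lipschitz2_plus].
  exists (M1 + M2); intros x y; eapply Rle_trans; [apply Rabs_triang |].
  specialize (B1 x y); specialize (B2 x y); lra.
Qed.

Lemma bounded_lipschitz2_opp (f : R -> R -> R) :
  bounded_lipschitz2 f -> bounded_lipschitz2 (fun x y => - f x y).
Proof.
  intros [[M B] L]; split; [| now apply lipschitz2_opp].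
  exists M; intros; rewrite Rabs_Ropp; apply B.
Qed.

Lemma bounded_lipschitz2_minus (f g : R -> R -> R) :
  bounded_lipschitz2 f -> bounded_lipschitz2 g -> bounded_lipschitz2 (fun x y => f x y - g x y).
Proof.
  intros Hf Hg; apply (bounded_lipschitz2_plus f (fun x y => - g x y) Hf).
  now apply bounded_lipschitz2_opp.
Qed.

Lemma bounded_lipschitz2_mult (f g : R -> R -> R) :
  bounded_lipschitz2 f -> bounded_lipschitz2 g -> bounded_lipschitz2 (fun x y => f x y * g x y).
Proof.
  intros [[M1 B1] [K1 L1]] [[M2 B2] [K2 L2]]; split.
  - exists (M1 * M2); intros x y; rewrite Rabs_mult.
    apply Rmult_le_compat; auto using Rabs_pos.
  - exists (M1 * K2 + M2 * K1); intros x y x' y'.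
    replace (f x y * g x y - f x' y' * g x' y')
      with (f x y * (g x y - g x' y') + g x' y' * (f x y - f x' y')) by ring.
    eapply Rle_trans; [apply Rabs_triang |]; rewrite !Rabs_mult.
    set (d := Rabs (x - x') + Rabs (y - y')).
    assert (Rabs (f x y) * Rabs (g x y - g x' y') <= M1 * (K2 * d))
      by (apply Rmult_le_compat; auto using Rabs_pos).
    assert (Rabs (g x' y') * Rabs (f x y - f x' y') <= M2 * (K1 * d))
      by (apply Rmult_le_compat; auto using Rabs_pos).
    lra.
Qed.

Lemma bounded_lipschitz2_pow (f : R -> R -> R) (n : nat) :
  bounded_lipschitz2 f -> bounded_lipschitz2 (fun x y => f x y ^ n).
Proof.
  intros Hf; induction n as [| n IH]; simpl.
  - apply bounded_lipschitz2_const.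
  - exact (bounded_lipschitz2_mult f (fun x y => f x y ^ n) Hf IH).
Qed.

Lemma lipschitz2_attains_max (f : R -> R -> R) (a b c d : R) :
  a <= b -> c <= d -> lipschitz2 f ->
  exists x0 y0, a <= x0 <= b /\ c <= y0 <= d /\
    forall x y, a <= x <= b -> c <= y <= d -> f x y <= f x0 y0.
Proof.
  intros Hab Hcd [K HK].
  assert (Hsection : forall x, exists y,
             (forall y', c <= y' <= d -> f x y' <= f x y) /\ c <= y <= d).
  { intros x; apply continuity_ab_maj; [exact Hcd |].
    intros y _; apply lipschitz_continuity_pt with K; intros y1 y2.
    specialize (HK x y1 x y2); rewrite Rminus_diag, Rabs_R0, Rplus_0_l in HK; exact HK. }
  destruct (choice _ Hsection) as [m Hm].
  assert (Henvelope : forall x x', Rabs (f x (m x) - f x' (m x')) <= K * Rabs (x - x')).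
  { intros x x'.
    destruct (Hm x) as [Mx Ix]; destruct (Hm x') as [Mx' Ix'].
    specialize (Mx (m x') Ix'); specialize (Mx' (m x) Ix).
    pose proof (HK x (m x) x' (m x)) as H1; pose proof (HK x' (m x') x (m x')) as H2.
    rewrite Rminus_diag, Rabs_R0, Rplus_0_r in H1, H2; rewrite (Rabs_minus_sym x' x) in H2.
    pose proof (Rle_abs (f x (m x) - f x' (m x))).
    pose proof (Rle_abs (f x' (m x') - f x (m x'))).
    apply Rabs_le; lra. }
  destruct (continuity_ab_maj (fun x => f x (m x)) a b Hab) as [x0 [Hx0 Ix0]].
  { intros x _; exact (lipschitz_continuity_pt _ K Henvelope x). }
  exists x0, (m x0); destruct (Hm x0) as [_ Iy0]; repeat split; try lra.
  intros x y Ix Iy; destruct (Hm x) as [Mx _].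
  specialize (Mx y Iy); specialize (Hx0 x Ix); simpl in Hx0; lra.
Qed.

Ltac lipschitz2_phase :=
  repeat first [ apply lipschitz2_minus | apply lipschitz2_plus
               | apply lipschitz2_fst | apply lipschitz2_snd ].

Ltac bounded_lipschitz2_trig :=
  repeat first
    [ apply bounded_lipschitz2_minus | apply bounded_lipschitz2_plus
    | apply bounded_lipschitz2_mult | apply bounded_lipschitz2_opp
    | apply bounded_lipschitz2_pow
    | apply bounded_lipschitz2_cos; lipschitz2_phase
    | apply bounded_lipschitz2_sin; lipschitz2_phase
    | apply bounded_lipschitz2_const ].

Lemma Fdisc_bounded_lipschitz2 (S : Mat4) (eps : R) :
  bounded_lipschitz2 (Fdisc S eps).
Proof.
  unfold Fdisc, pcoef, qcoef, Cmul, Cadd, Csub, Cconj, Cnorm2, expi; simpl.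
  bounded_lipschitz2_trig.
Qed.

Lemma Fdisc_congr_l (S : Mat4) (eps x x' y : R) :
  cos x = cos x' -> sin x = sin x' -> Fdisc S eps x y = Fdisc S eps x' y.
Proof.
  intros Hc Hs; unfold Fdisc, pcoef, qcoef, Cmul, Cadd, Csub, Cconj, Cnorm2, expi; simpl.
  now rewrite !cos_plus, !sin_plus, !cos_minus, !sin_minus, Hc, Hs.
Qed.

Lemma Fdisc_congr_r (S : Mat4) (eps x y y' : R) :
  cos y = cos y' -> sin y = sin y' -> Fdisc S eps x y = Fdisc S eps x y'.
Proof.
  intros Hc Hs; unfold Fdisc, pcoef, qcoef, Cmul, Cadd, Csub, Cconj, Cnorm2, expi; simpl.
  now rewrite !cos_plus, !sin_plus, !cos_minus, !sin_minus, Hc, Hs.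
Qed.

Lemma in_dom_representative (t : R) :
  - PI <= t <= PI -> exists t', in_dom t' /\ cos t = cos t' /\ sin t = sin t'.
Proof.
  intros Ht; pose proof PI_RGT_0; unfold in_dom.
  destruct (Req_dec t (- PI)) as [-> | Hne].
  - exists PI; rewrite cos_neg, sin_neg, sin_PI; repeat split; lra.
  - exists t; repeat split; lra.
Qed.

Definition quarter_turns : list R := [0; PI / 2; PI; - (PI / 2)].

Lemma quarter_turns_bounds (t : R) : In t quarter_turns -> - PI <= t <= PI.
Proof.
  pose proof PI_RGT_0; simpl; intros [<- | [<- | [<- | [<- | []]]]]; lra.
Qed.

Definition quarter_turn_grid_sum (F : R -> R -> R) : R :=
  fold_right Rplus 0 (map (fun t => F (fst t) (snd t)) (list_prod quarter_turns quarter_turns)).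

Lemma Fdisc_quarter_turn_grid_sum (S : Mat4) (eps : R) :
  quarter_turn_grid_sum (Fdisc S eps)
  = 4 * (re (S 1 1)%nat + re (S 2 2)%nat - re (S 3 3)%nat - re (S 4 4)%nat) ^ 2
    + 8 * eps ^ 2 * (Cnorm2 (S 1 2)%nat + Cnorm2 (S 3 4)%nat)
    + 16 * (Cnorm2 (S 1 3)%nat + Cnorm2 (S 1 4)%nat + Cnorm2 (S 2 3)%nat + Cnorm2 (S 2 4)%nat).
Proof.
  unfold quarter_turn_grid_sum, quarter_turns, Fdisc, pcoef, qcoef,
    Cmul, Cadd, Csub, Cconj, Cnorm2, expi; simpl.
  rewrite ?cos_plus, ?sin_plus, ?cos_minus, ?sin_minus,
    ?cos_neg, ?sin_neg, ?cos_PI2, ?sin_PI2, ?cos_PI, ?sin_PI, ?cos_0, ?sin_0.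
  field.
Qed.

Lemma Cnorm2_nonneg (z : Cx) : 0 <= Cnorm2 z.
Proof. unfold Cnorm2; nra. Qed.

Lemma Fdisc_quarter_turn_grid_sum_nonneg (S : Mat4) (eps : R) :
  0 <= quarter_turn_grid_sum (Fdisc S eps).
Proof.
  rewrite Fdisc_quarter_turn_grid_sum.
  pose proof (Cnorm2_nonneg (S 1 2)%nat); pose proof (Cnorm2_nonneg (S 3 4)%nat).
  pose proof (Cnorm2_nonneg (S 1 3)%nat); pose proof (Cnorm2_nonneg (S 1 4)%nat).
  pose proof (Cnorm2_nonneg (S 2 3)%nat); pose proof (Cnorm2_nonneg (S 2 4)%nat).
  pose proof (pow2_ge_0 eps).
  pose proof (pow2_ge_0 (re (S 1 1)%nat + re (S 2 2)%nat - re (S 3 3)%nat - re (S 4 4)%nat)).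
  nra.
Qed.

Lemma fold_right_Rplus_le (l : list R) (m : R) :
  (forall x, In x l -> x <= m) -> fold_right Rplus 0 l <= INR (length l) * m.
Proof.
  induction l as [| x l IH]; cbn [fold_right length]; intros Hl; [simpl; lra |].
  rewrite S_INR, Rmult_plus_distr_r, Rmult_1_l.
  assert (x <= m) by (apply Hl; left; reflexivity).
  assert (fold_right Rplus 0 l <= INR (length l) * m) by (apply IH; intros; apply Hl; right; assumption).
  lra.
Qed.

Lemma quarter_turn_grid_sum_le (F : R -> R -> R) (m : R) :
  (forall x y, - PI <= x <= PI -> - PI <= y <= PI -> F x y <= m) ->
  quarter_turn_grid_sum F <= 16 * m.
Proof.
  intros HF; unfold quarter_turn_grid_sum.
  eapply Rle_trans; [apply fold_right_Rplus_le |].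
  - intros z Hz; apply in_map_iff in Hz as [[x y] [<- Hxy]].
    apply in_prod_iff in Hxy as [Hx Hy].
    apply HF; apply quarter_turns_bounds; assumption.
  - simpl; right; ring.
Qed.

Theorem mainTheorem11 (S : Mat4) (eps : R) :
  Hermitian4 S -> (eps = 1 \/ eps = -1) ->
  exists t1 t2 : R, in_dom t1 /\ in_dom t2 /\
    (forall u1 u2 : R, in_dom u1 -> in_dom u2 -> Fdisc S eps u1 u2 <= Fdisc S eps t1 t2) /\
    0 <= Fdisc S eps t1 t2.
Proof.
  intros _ _; pose proof PI_RGT_0.
  destruct (Fdisc_bounded_lipschitz2 S eps) as [_ Hlip].
  destruct (lipschitz2_attains_max (Fdisc S eps) (- PI) PI (- PI) PI
              ltac:(lra) ltac:(lra) Hlip) as [x0 [y0 [Hx0 [Hy0 Hmax]]]].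
  destruct (in_dom_representative x0 Hx0) as [t1 [Ht1 [Hc1 Hs1]]].
  destruct (in_dom_representative y0 Hy0) as [t2 [Ht2 [Hc2 Hs2]]].
  assert (Hval : Fdisc S eps t1 t2 = Fdisc S eps x0 y0).
  { now rewrite (Fdisc_congr_l S eps x0 t1 y0 Hc1 Hs1), (Fdisc_congr_r S eps t1 y0 t2 Hc2 Hs2). }
  exists t1, t2; split; [exact Ht1 | split; [exact Ht2 | split]]; rewrite Hval.
  - intros u1 u2 [? ?] [? ?]; apply Hmax; lra.
  - pose proof (Fdisc_quarter_turn_grid_sum_nonneg S eps).
    pose proof (quarter_turn_grid_sum_le (Fdisc S eps) _ Hmax).
    lra.
Qed.
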